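(* Let $\alpha:\mathbb{C}\to\mathbb{C}$ be an exponential automorphism, i.e. a function satisfying $\alpha(z_1+z_2)=\alpha(z_1)+\alpha(z_2)$ and $\alpha(e^z)=e^{\alpha(z)}$ for all $z,z_1,z_2\in\mathbb{C}$. Suppose that either $\alpha(x)\in\mathbb{R}$ for all $x\in\mathbb{R}$, or $\alpha$ is continuous. Then $\alpha(2^{1/k})=2^{1/k}$ for $k=2,3,4$ and $\alpha(\ln 2)=\ln 2$.
   Context: Here $2^{1/k}$ denotes the positive real $k$th root of $2$, and $\ln 2$ the real natural logarithm of $2$. *)

From Stdlib Require Import Reals.
From Coquelicot Require Import Coquelicot.
Open Scope R_scope.

Definition Cexp (z : C) : C :=
  (exp (Re z) * cos (Im z), exp (Re z) * sin (Im z)).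

Definition exp_automorphism (alpha : C -> C) : Prop :=
  (forall z1 z2 : C, alpha (Cplus z1 z2) = Cplus (alpha z1) (alpha z2)) /\
  (forall z : C, alpha (Cexp z) = Cexp (alpha z)).

(** The restriction of [alpha] to the reals splits into two additive real
    functions, its real and imaginary parts, which take the values [1] and [0]
    at [1] because [alpha 1 = alpha (exp 0) = exp (alpha 0) = 1].  An additive
    function is [Q]-linear, so it is linear as soon as it is small on some
    interval [[0, delta)].  In the continuous case this is continuity at [0];
    in the real case the real part is nonnegative on [[0, +oo)], since
    [alpha (exp y) = exp (alpha y)] is a positive real, hence monotone.  Thus
    [alpha] fixes every real, in particular [2^(1/k)] and [ln 2]. *)

From Stdlib Require Import Reals Lra ZArith Lia.
From Coquelicot Require Import Coquelicot.
Open Scope R_scope.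

Lemma exists_grid_point_below (x : R) (n : nat) : (0 < n)%nat ->
  exists m : Z, 0 <= x - IZR m / INR n < / INR n.
Proof.
  intros Hn; assert (Hn' : 0 < INR n) by (apply lt_0_INR; lia).
  destruct (archimed (INR n * x)) as [Hup Hup1].
  exists (up (INR n * x) - 1)%Z; rewrite minus_IZR.
  replace (x - (IZR (up (INR n * x)) - 1) / INR n)
    with ((INR n * x - IZR (up (INR n * x)) + 1) / INR n) by (field; lra).
  split.
  - apply Rdiv_le_0_compat; lra.
  - unfold Rdiv; rewrite <- (Rmult_1_l (/ INR n)) at 2.
    apply Rmult_lt_compat_r; [apply Rinv_0_lt_compat |]; lra.
Qed.

Section AdditiveFunction.

Variable phi : R -> R.
Hypothesis phi_additive : forall x y, phi (x + y) = phi x + phi y.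

Lemma additive_0 : phi 0 = 0.
Proof. pose proof (phi_additive 0 0) as H; rewrite Rplus_0_r in H; lra. Qed.

Lemma additive_opp (x : R) : phi (- x) = - phi x.
Proof.
  pose proof (phi_additive x (- x)) as H.
  rewrite Rplus_opp_r, additive_0 in H; lra.
Qed.

Lemma additive_minus (x y : R) : phi (x - y) = phi x - phi y.
Proof. unfold Rminus; rewrite phi_additive, additive_opp; reflexivity. Qed.

Lemma additive_nat_mul (n : nat) (x : R) : phi (INR n * x) = INR n * phi x.
Proof.
  induction n as [|n IH].
  - rewrite !Rmult_0_l; apply additive_0.
  - rewrite S_INR, !Rmult_plus_distr_r, !Rmult_1_l, phi_additive, IH.
    reflexivity.
Qed.

Lemma additive_Z_mul (m : Z) (x : R) : phi (IZR m * x) = IZR m * phi x.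
Proof.
  destruct m as [|p|p].
  - rewrite !Rmult_0_l; apply additive_0.
  - rewrite <- positive_nat_Z, <- INR_IZR_INZ; apply additive_nat_mul.
  - rewrite <- Pos2Z.opp_pos, opp_IZR, <- positive_nat_Z, <- INR_IZR_INZ.
    rewrite !Ropp_mult_distr_l_reverse, additive_opp, additive_nat_mul.
    reflexivity.
Qed.

Lemma additive_Q_mul (m : Z) (n : nat) (x : R) : (0 < n)%nat ->
  phi (IZR m / INR n * x) = IZR m / INR n * phi x.
Proof.
  intros Hn; assert (Hn' : 0 < INR n) by (apply lt_0_INR; lia).
  apply Rmult_eq_reg_l with (INR n); [| lra].
  rewrite <- additive_nat_mul.
  replace (INR n * (IZR m / INR n * x)) with (IZR m * x) by (field; lra).
  rewrite additive_Z_mul; field; lra.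
Qed.

Lemma additive_linear_of_small_near_0 :
  (forall eps, 0 < eps ->
     exists delta, 0 < delta /\ forall s, 0 <= s < delta -> Rabs (phi s) < eps) ->
  forall x, phi x = phi 1 * x.
Proof.
  intros Hsmall x; apply cond_eq; intros eps Heps.
  destruct (Hsmall (eps / 2)) as [delta [Hdelta Hphi]]; [lra |].
  set (c := Rabs (phi 1) + 1).
  assert (Hc : 0 < c) by (unfold c; pose proof (Rabs_pos (phi 1)); lra).
  destruct (archimed_cor1 (Rmin delta (eps / (2 * c)))) as [n [Hn Hn0]].
  { apply Rmin_glb_lt; [lra | apply Rdiv_lt_0_compat; lra]. }
  destruct (exists_grid_point_below x n Hn0) as [m Hm].
  set (s := x - IZR m / INR n) in Hm.
  (* On the grid point [m/n], [phi] is already linear by Q-linearity. *)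
  assert (Hx : phi x - phi 1 * x = phi s - phi 1 * s).
  { replace x with (IZR m / INR n * 1 + s) at 1 by (unfold s; ring).
    rewrite phi_additive, additive_Q_mul by exact Hn0; unfold s; ring. }
  assert (Hs : Rabs (phi s) < eps / 2).
  { apply Hphi; pose proof (Rmin_l delta (eps / (2 * c))); lra. }
  assert (Hs1 : Rabs (phi 1 * s) < eps / 2).
  { rewrite Rabs_mult, (Rabs_right s) by lra.
    apply Rle_lt_trans with (c * s).
    - apply Rmult_le_compat_r; unfold c; lra.
    - pose proof (Rmin_r delta (eps / (2 * c))).
      apply Rmult_lt_reg_l with (/ c); [apply Rinv_0_lt_compat; lra |].
      replace (/ c * (c * s)) with s by (field; lra).
      replace (/ c * (eps / 2)) with (eps / (2 * c)) by (field; lra); lra. }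
  rewrite Hx; unfold Rminus at 1.
  eapply Rle_lt_trans; [apply Rabs_triang |]; rewrite Rabs_Ropp; lra.
Qed.

Lemma additive_linear_of_nonneg :
  (forall s, 0 <= s -> 0 <= phi s) -> forall x, phi x = phi 1 * x.
Proof.
  intros Hnonneg; apply additive_linear_of_small_near_0; intros eps Heps.
  assert (H1 : 0 <= phi 1) by (apply Hnonneg; lra).
  destruct (archimed_cor1 (eps / (phi 1 + 1))) as [n [Hn Hn0]].
  { apply Rdiv_lt_0_compat; lra. }
  assert (Hn' : 0 < INR n) by (apply lt_0_INR; lia).
  assert (Hinv : 0 < / INR n) by (apply Rinv_0_lt_compat; exact Hn').
  exists (/ INR n); split; [exact Hinv |]; intros s Hs.
  assert (Hphin : phi (/ INR n) = phi 1 / INR n).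
  { replace (/ INR n) with (IZR 1 / INR n * 1) by (simpl; field; lra).
    rewrite additive_Q_mul by exact Hn0; simpl; field; lra. }
  assert (Hs0 := Hnonneg s (proj1 Hs)).
  assert (Hmono := Hnonneg (/ INR n - s) ltac:(lra)).
  rewrite additive_minus, Hphin in Hmono.
  assert (Hbound : (phi 1 + 1) * / INR n < eps).
  { apply Rlt_le_trans with ((phi 1 + 1) * (eps / (phi 1 + 1))).
    - apply Rmult_lt_compat_l; lra.
    - right; field; lra. }
  unfold Rdiv in Hmono.
  rewrite Rabs_right by lra; lra.
Qed.

Lemma additive_linear_of_continuous_0 :
  continuous phi 0 -> forall x, phi x = phi 1 * x.
Proof.
  intros Hcont; apply additive_linear_of_small_near_0; intros eps Heps.
  destruct (proj1 (filterlim_locally _ _) Hcont (mkposreal eps Heps))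
    as [delta Hdelta].
  exists delta; split; [apply cond_pos |]; intros s Hs.
  assert (Hball : ball 0 delta s).
  { change (Rabs (s - 0) < delta); rewrite Rminus_0_r, Rabs_right; lra. }
  specialize (Hdelta s Hball); change (Rabs (phi s - phi 0) < eps) in Hdelta.
  rewrite additive_0, Rminus_0_r in Hdelta; exact Hdelta.
Qed.

End AdditiveFunction.

Lemma C_eq_RtoC (z : C) (x : R) : Re z = x -> Im z = 0 -> z = RtoC x.
Proof. destruct z; simpl; intros -> ->; reflexivity. Qed.

Lemma Cexp_RtoC (x : R) : Cexp (RtoC x) = RtoC (exp x).
Proof.
  unfold Cexp, RtoC; simpl; rewrite cos_0, sin_0, Rmult_1_r, Rmult_0_r.
  reflexivity.
Qed.

Lemma continuous_RtoC (x : R) : continuous RtoC x.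
Proof.
  apply filterlim_locally; intros eps; exists eps; intros y Hy.
  split; [exact Hy | apply ball_center].
Qed.

Lemma continuous_Re (z : C) : continuous Re z.
Proof. destruct z; apply continuous_fst. Qed.

Lemma continuous_Im (z : C) : continuous Im z.
Proof. destruct z; apply continuous_snd. Qed.

Lemma continuous_Re_comp_RtoC (f : C -> C) (x : R) :
  continuous f (RtoC x) -> continuous (fun t => Re (f (RtoC t))) x.
Proof.
  intros Hf; apply continuous_comp; [| apply continuous_Re].
  apply continuous_comp; [apply continuous_RtoC | exact Hf].
Qed.

Lemma continuous_Im_comp_RtoC (f : C -> C) (x : R) :
  continuous f (RtoC x) -> continuous (fun t => Im (f (RtoC t))) x.
Proof.
  intros Hf; apply continuous_comp; [| apply continuous_Im].
  apply continuous_comp; [apply continuous_RtoC | exact Hf].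
Qed.

Section ExpAutomorphism.

Variable alpha : C -> C.
Hypothesis alpha_additive :
  forall z1 z2 : C, alpha (Cplus z1 z2) = Cplus (alpha z1) (alpha z2).
Hypothesis alpha_Cexp : forall z : C, alpha (Cexp z) = Cexp (alpha z).

Lemma Re_alpha_RtoC_additive (x y : R) :
  Re (alpha (RtoC (x + y))) = Re (alpha (RtoC x)) + Re (alpha (RtoC y)).
Proof. rewrite RtoC_plus, alpha_additive; reflexivity. Qed.

Lemma Im_alpha_RtoC_additive (x y : R) :
  Im (alpha (RtoC (x + y))) = Im (alpha (RtoC x)) + Im (alpha (RtoC y)).
Proof. rewrite RtoC_plus, alpha_additive; reflexivity. Qed.

Lemma alpha_RtoC_0 : alpha (RtoC 0) = RtoC 0.
Proof.
  apply C_eq_RtoC.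
  - exact (additive_0 _ Re_alpha_RtoC_additive).
  - exact (additive_0 _ Im_alpha_RtoC_additive).
Qed.

Lemma alpha_RtoC_1 : alpha (RtoC 1) = RtoC 1.
Proof.
  rewrite <- exp_0, <- !Cexp_RtoC, alpha_Cexp, alpha_RtoC_0; reflexivity.
Qed.

Lemma Re_alpha_RtoC_nonneg :
  (forall x, Im (alpha (RtoC x)) = 0) ->
  forall s, 0 <= s -> 0 <= Re (alpha (RtoC s)).
Proof.
  intros Hreal s [Hs | <-].
  - rewrite <- (exp_ln s Hs), <- Cexp_RtoC, alpha_Cexp; unfold Cexp; simpl.
    rewrite Hreal, cos_0, Rmult_1_r; left; apply exp_pos.
  - rewrite alpha_RtoC_0; simpl; lra.
Qed.

Theorem exp_automorphism_fixes_reals :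
  (forall x, Im (alpha (RtoC x)) = 0) \/ (forall z, continuous alpha z) ->
  forall x, alpha (RtoC x) = RtoC x.
Proof.
  intros Hcase x.
  assert (HRe1 : Re (alpha (RtoC 1)) = 1) by (rewrite alpha_RtoC_1; reflexivity).
  assert (HIm1 : Im (alpha (RtoC 1)) = 0) by (rewrite alpha_RtoC_1; reflexivity).
  apply C_eq_RtoC; destruct Hcase as [Hreal | Hcont].
  - rewrite (additive_linear_of_nonneg _ Re_alpha_RtoC_additive
               (Re_alpha_RtoC_nonneg Hreal)), HRe1; ring.
  - rewrite (additive_linear_of_continuous_0 _ Re_alpha_RtoC_additive
               (continuous_Re_comp_RtoC _ _ (Hcont (RtoC 0)))), HRe1; ring.
  - apply Hreal.
  - rewrite (additive_linear_of_continuous_0 _ Im_alpha_RtoC_additive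
               (continuous_Im_comp_RtoC _ _ (Hcont (RtoC 0)))), HIm1; ring.
Qed.

End ExpAutomorphism.

Theorem mainTheorem5 (alpha : C -> C) :
  exp_automorphism alpha ->
  ((forall x : R, Im (alpha (RtoC x)) = 0) \/
   (forall z : C, continuous alpha z)) ->
  (forall k : nat, (2 <= k <= 4)%nat ->
     alpha (RtoC (Rpower 2 (/ INR k))) = RtoC (Rpower 2 (/ INR k))) /\
  alpha (RtoC (ln 2)) = RtoC (ln 2).
Proof.
  intros [Hadd Hexp] Hcase.
  pose proof (exp_automorphism_fixes_reals alpha Hadd Hexp Hcase) as Hfix.
  split; [intros k _ |]; apply Hfix.
Qed.
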